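(* Let $(X,d)$ be a compact metric space, $\Lambda$ a finite nonempty set, and $\mathcal{F}=\{X; f_{\lambda}\mid\lambda\in\Lambda\}$ a parameterized iterated function system such that each $f_\lambda:X\to X$ is continuous and surjective. If $\mathcal{F}$ has the asymptotic average shadowing property, then $\mathcal{F}$ is chain transitive.
   Context: For $\sigma=\{\lambda_0,\lambda_1,\dots\}\in\Lambda^{\mathbb{Z}_+}$ write $\mathcal{F}_{\sigma_n}=f_{\lambda_{n-1}}\circ\cdots\circ f_{\lambda_0}$ ($\mathcal{F}_{\sigma_0}$ the identity). A sequence $\{x_i\}_{i\ge0}$ in $X$ is an asymptotic average pseudo-orbit of $\mathcal{F}$ if there is $\sigma=\{\lambda_0,\lambda_1,\dots\}\in\Lambda^{\mathbb{Z}_+}$ with $\lim_{n\to\infty}\frac1n\sum_{i=0}^{n-1}d(f_{\lambda_i}(x_i),x_{i+1})=0$; it is asymptotically shadowed in average by $z\in X$ if there is $\sigma\in\Lambda^{\mathbb{Z}_+}$ with $\lim_{n\to\infty}\frac1n\sum_{i=0}^{n-1}d(\mathcal{F}_{\sigma_i}(z),x_i)=0$. $\mathcal{F}$ has the asymptotic average shadowing property if every asymptotic average pseudo-orbit is asymptotically shadowed in average by some point of $X$. For $\delta>0$, a $\delta$-chain from $x$ to $y$ is a finite sequence $x=x_0,x_1,\dots,x_b=y$ in $X$ together with $\lambda_0,\dots,\lambda_{b-1}\in\Lambda$ such that $d(f_{\lambda_i}(x_i),x_{i+1})<\delta$ for all $0\le i<b$. $\mathcal{F}$ is chain transitive if for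 all $x,y\in X$ and every $\delta>0$ there is a $\delta$-chain of $\mathcal{F}$ from $x$ to $y$. *)

From Stdlib Require Import Reals List.
Open Scope R_scope.

Definition is_metric {X : Type} (d : X -> X -> R) : Prop :=
  (forall x y, 0 <= d x y) /\
  (forall x y, d x y = 0 <-> x = y) /\
  (forall x y, d x y = d y x) /\
  (forall x y z, d x z <= d x y + d y z).

Definition metric_open {X : Type} (d : X -> X -> R) (U : X -> Prop) : Prop :=
  forall x, U x -> exists eps, 0 < eps /\ forall y, d x y < eps -> U y.

Definition metric_compact {X : Type} (d : X -> X -> R) : Prop :=
  forall (I : Type) (U : I -> X -> Prop),
    (forall i, metric_open d (U i)) ->
    (forall x, exists i, U i x) ->
    exists l : list I, forall x, exists i, In i l /\ U i x.

Definition metric_continuous {X : Type} (d : X -> X -> R) (f : X -> X) : Prop :=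
  forall x eps, 0 < eps -> exists delta, 0 < delta /\
    forall y, d x y < delta -> d (f x) (f y) < eps.

Definition surjective {X : Type} (f : X -> X) : Prop := forall y, exists x, f x = y.

Definition finite_type (L : Type) : Prop := exists l : list L, forall a, In a l.

Fixpoint Fsig {X L : Type} (f : L -> X -> X) (sigma : nat -> L) (z : X) (n : nat) : X :=
  match n with
  | O => z
  | S m => f (sigma m) (Fsig f sigma z m)
  end.

(* lim_{n->oo} (1/n) sum_{i=0}^{n-1} u i = 0
   (indexed by n+1 >= 1; sum_f_R0 u n = u 0 + ... + u n). *)
Definition avg_to_zero (u : nat -> R) : Prop :=
  Un_cv (fun n => sum_f_R0 u n / INR (S n)) 0.

Definition asymptotic_average_pseudo_orbit {X L : Type} (d : X -> X -> R)
    (f : L -> X -> X) (x : nat -> X) : Prop :=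
  exists sigma : nat -> L, avg_to_zero (fun i => d (f (sigma i) (x i)) (x (S i))).

Definition asymptotically_shadowed_in_average {X L : Type} (d : X -> X -> R)
    (f : L -> X -> X) (x : nat -> X) (z : X) : Prop :=
  exists sigma : nat -> L, avg_to_zero (fun i => d (Fsig f sigma z i) (x i)).

Definition asymptotic_average_shadowing {X L : Type} (d : X -> X -> R)
    (f : L -> X -> X) : Prop :=
  forall x : nat -> X, asymptotic_average_pseudo_orbit d f x ->
    exists z, asymptotically_shadowed_in_average d f x z.

Definition delta_chain {X L : Type} (d : X -> X -> R) (f : L -> X -> X)
    (delta : R) (x y : X) : Prop :=
  exists (b : nat) (xs : nat -> X) (ls : nat -> L),
    xs O = x /\ xs b = y /\
    forall i, (i < b)%nat -> d (f (ls i) (xs i)) (xs (S i)) < delta.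

Definition chain_transitive {X L : Type} (d : X -> X -> R) (f : L -> X -> X) : Prop :=
  forall x y : X, forall delta, 0 < delta -> delta_chain d f delta x y.

From Stdlib Require Import Reals List Lia Lra Psatz Classical IndefiniteDescription.
Open Scope R_scope.

(** Fix [l] and a right inverse [g] of the surjection [f l].  Cut time into
    the dyadic blocks [2^k - 1 <= n < 2^(k+1) - 1] and build a sequence which
    on even blocks runs forward from [x] along [f l], and on odd blocks runs
    along a backward [g]-orbit of [y] that reaches [y] exactly at the end of
    the block.  It is an exact orbit inside each block, so its errors up to
    time [n] sum to [O(log n)] and it is an asymptotic average pseudo-orbit.
    A point [z] shadowing it in average must come [delta]-close to it
    somewhere in a late even block and somewhere in a later odd block, since
    a block is as long as the time before it.  Following the orbit of [x] to
    the first of these times, the shadowing orbit of [z] to the second, and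
    the backward orbit of [y] to its end yields a [delta]-chain from [x] to
    [y].  Compactness is only used to bound [d]. *)

Section MetricFacts.

Variables (X : Type) (d : X -> X -> R).
Hypothesis metric_d : is_metric d.

Lemma metric_nonneg (u v : X) : 0 <= d u v.
Proof. exact (proj1 metric_d u v). Qed.

Lemma metric_refl (u : X) : d u u = 0.
Proof. exact (proj2 (proj1 (proj2 metric_d) u u) eq_refl). Qed.

Lemma metric_sym (u v : X) : d u v = d v u.
Proof. exact (proj1 (proj2 (proj2 metric_d)) u v). Qed.

Lemma metric_triangle (u v w : X) : d u w <= d u v + d v w.
Proof. exact (proj2 (proj2 (proj2 metric_d)) u v w). Qed.

Lemma metric_compact_bounded (x0 : X) :
  metric_compact d -> exists D, forall u v, d u v <= D.
Proof.
  intros compact_d.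
  destruct (compact_d nat (fun n v => d x0 v < INR n)) as [ns Hns].
  - intros n v Hv; exists (INR n - d x0 v); split; [lra|].
    intros w Hw; pose proof (metric_triangle x0 v w); lra.
  - intros v; destruct (INR_unbounded (d x0 v)) as [n Hn]; exists n; lra.
  - assert (Hball : forall v, d x0 v <= INR (list_max ns)).
    { intros v; destruct (Hns v) as [n [Hin Hv]].
      assert (n <= list_max ns)%nat
        by exact (proj1 (Forall_forall _ _) (proj1 (list_max_le ns _) (le_n _)) n Hin).
      apply le_INR in H; lra. }
    exists (2 * INR (list_max ns)); intros u v.
    pose proof (metric_triangle u x0 v); rewrite (metric_sym u x0) in H.
    pose proof (Hball u); pose proof (Hball v); lra.
Qed.

End MetricFacts.

Lemma sum_f_R0_ge_on_tail (s : nat -> R) (c : R) (a n : nat) :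
  (forall i, 0 <= s i) -> (forall i, (a <= i <= n)%nat -> c <= s i) ->
  c * INR (S n - a) <= sum_f_R0 s n.
Proof.
  intros s_nonneg s_ge; induction n as [|n IH].
  - destruct a as [|a]; simpl.
    + rewrite Rmult_1_r; apply s_ge; lia.
    + rewrite Rmult_0_r; apply s_nonneg.
  - simpl sum_f_R0; destruct (Nat.le_gt_cases a (S n)) as [Ha|Ha].
    + replace (S (S n) - a)%nat with (S (S n - a)) by lia; rewrite S_INR.
      assert (c * INR (S n - a) <= sum_f_R0 s n) by (apply IH; intros; apply s_ge; lia).
      pose proof (s_ge (S n) ltac:(lia)); lra.
    + replace (S (S n) - a)%nat with 0%nat by lia; simpl; rewrite Rmult_0_r.
      pose proof (cond_pos_sum s n s_nonneg); pose proof (s_nonneg (S n)); lra.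
Qed.

Lemma avg_to_zero_of_sum_sq_le (e : nat -> R) (C : R) :
  (forall n, 0 <= e n) -> (forall n, (sum_f_R0 e n) ^ 2 <= C * INR (S n)) ->
  avg_to_zero e.
Proof.
  intros e_nonneg sum_sq_le eps Heps.
  destruct (INR_unbounded (C / (eps * eps))) as [N HN].
  exists N; intros n Hn; unfold R_dist; rewrite Rminus_0_r.
  assert (Hq : INR N < INR (S n)) by (apply lt_INR; lia).
  pose proof (pos_INR N).
  assert (HC : C < eps * eps * INR (S n)).
  { replace C with (C / (eps * eps) * (eps * eps)) by (field; lra).
    rewrite (Rmult_comm (eps * eps)); apply Rmult_lt_compat_r; nra. }
  pose proof (sum_sq_le n) as Hsq; pose proof (cond_pos_sum e n e_nonneg).
  set (q := INR (S n)) in *; set (S0 := sum_f_R0 e n) in *.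
  assert (Ha : S0 = S0 / q * q) by (field; lra).
  assert (0 <= S0 / q) by (apply Rle_mult_inv_pos; lra).
  set (a := S0 / q) in *; rewrite Rabs_right by lra.
  apply Rnot_le_lt; intros Hae; rewrite Ha in Hsq.
  assert (eps * q <= a * q) by (apply Rmult_le_compat_r; lra).
  assert (C * q < eps * eps * q * q) by (apply Rmult_lt_compat_r; lra).
  assert (eps * q * (eps * q) <= a * q * (a * q)) by (apply Rmult_le_compat; nra).
  simpl in Hsq; lra.
Qed.

(** An average-null nonnegative sequence cannot stay above [delta] on a
    whole interval [m <= t <= 2m - 2] once [m] is large, since that interval
    makes up half of the time up to [2m - 2]. *)
Lemma avg_to_zero_small_on_dyadic_interval (s : nat -> R) (delta : R) :
  0 < delta -> (forall n, 0 <= s n) -> avg_to_zero s ->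
  exists M, forall m, (M <= m)%nat ->
    exists t, (m <= t)%nat /\ (S t < 2 * m)%nat /\ s t < delta.
Proof.
  intros Hdelta s_nonneg avg_s.
  destruct (avg_s (delta / 4) ltac:(lra)) as [M HM].
  exists (M + 2)%nat; intros m Hm.
  apply NNPP; intros Hnone.
  assert (s_ge : forall t, (m <= t <= 2 * m - 2)%nat -> delta <= s t).
  { intros t Ht; apply Rnot_lt_le; intros Hlt; apply Hnone; exists t; split; [|split]; auto; lia. }
  pose proof (sum_f_R0_ge_on_tail s delta m (2 * m - 2) s_nonneg s_ge) as Hsum.
  specialize (HM (2 * m - 2)%nat ltac:(lia)); unfold R_dist in HM.
  rewrite Rminus_0_r in HM.
  replace (S (2 * m - 2) - m)%nat with (m - 1)%nat in Hsum by lia.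
  replace (S (2 * m - 2)) with (2 * (m - 1) + 1)%nat in HM by lia.
  rewrite plus_INR, mult_INR in HM; simpl (INR 2) in HM; simpl (INR 1) in HM.
  assert (Hm1 : 1 <= INR (m - 1)) by (apply (le_INR 1); lia).
  pose proof (cond_pos_sum s (2 * m - 2) s_nonneg).
  set (K := INR (m - 1)) in *; set (S0 := sum_f_R0 s (2 * m - 2)) in *.
  rewrite Rabs_right in HM by (apply Rle_ge, Rle_mult_inv_pos; lra).
  apply (Rmult_lt_compat_r (2 * K + 1)) in HM; [|lra].
  unfold Rdiv in HM; rewrite Rmult_assoc, Rinv_l in HM by lra.
  nra.
Qed.

Definition block (n : nat) : nat := Nat.log2 (S n).
Definition offset (n : nat) : nat := S n - 2 ^ block n.

Lemma block_spec (n : nat) : (2 ^ block n <= S n < 2 * 2 ^ block n)%nat.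
Proof. rewrite <- Nat.pow_succ_r'; apply Nat.log2_spec; lia. Qed.

Lemma block_eq (k n : nat) : (2 ^ k <= S n < 2 * 2 ^ k)%nat -> block n = k.
Proof. intros H; apply Nat.log2_unique; [lia|]; rewrite Nat.pow_succ_r'; exact H. Qed.

Lemma block_succ (n : nat) : block (S n) = S (block n) \/ block (S n) = block n.
Proof. apply Nat.log2_succ_or. Qed.

Lemma square_le_pow2 (k : nat) : (S k * S k <= 4 * 2 ^ k)%nat.
Proof.
  induction k as [|k IH]; [simpl; lia|].
  rewrite Nat.pow_succ_r'; destruct k as [|[|k]]; [simpl; lia | simpl; lia | nia].
Qed.

Lemma avg_to_zero_small_in_block (s : nat -> R) (delta : R) (N : nat) (b : bool) :
  0 < delta -> (forall n, 0 <= s n) -> avg_to_zero s ->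
  exists t, (N <= t)%nat /\ Nat.even (block t) = b /\ (1 <= offset t)%nat /\ s t < delta.
Proof.
  intros Hdelta s_nonneg avg_s.
  destruct (avg_to_zero_small_on_dyadic_interval s delta Hdelta s_nonneg avg_s) as [M HM].
  set (k := ((if b then 0 else 1) + 2 * (M + N))%nat).
  assert (Hk : Nat.even k = b) by (unfold k; rewrite Nat.even_add_mul_2; destruct b; reflexivity).
  assert (Hpow : (k < 2 ^ k)%nat) by (apply Nat.pow_gt_lin_r; lia).
  destruct (HM (2 ^ k)%nat ltac:(unfold k in *; lia)) as [t [Ht1 [Ht2 Ht]]].
  assert (Hblock : block t = k) by (apply block_eq; lia).
  exists t; unfold offset; rewrite Hblock; repeat split; auto; unfold k in *; lia.
Qed.

Section Bridge.

Variables (X : Type) (F G : X -> X).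
Hypothesis F_G : forall u, F (G u) = u.
Variables (x y : X).

Definition bridge (n : nat) : X :=
  if Nat.even (block n) then Nat.iter (offset n) F x
  else Nat.iter (2 ^ block n - 1 - offset n) G y.

Lemma bridge_step (n : nat) : block (S n) = block n -> F (bridge n) = bridge (S n).
Proof.
  intros Hblock; unfold bridge; rewrite Hblock.
  pose proof (block_spec n); pose proof (block_spec (S n)) as Hs; rewrite Hblock in Hs.
  assert (Hoff : offset (S n) = S (offset n)) by (unfold offset; rewrite Hblock; lia).
  destruct (Nat.even (block n)).
  - rewrite Hoff; reflexivity.
  - replace (2 ^ block n - 1 - offset n)%nat
      with (S (2 ^ block n - 1 - offset (S n))) by (unfold offset in *; rewrite Hblock in *; lia).
    apply F_G.
Qed.

Variables (d : X -> X -> R) (D : R).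
Hypothesis metric_d : is_metric d.
Hypothesis d_le : forall u v, d u v <= D.

Lemma bridge_error_sum_le (n : nat) :
  sum_f_R0 (fun i => d (F (bridge i)) (bridge (S i))) n <= D * INR (block (S n)).
Proof.
  induction n as [|n IH].
  - change (block 1) with 1%nat; simpl; rewrite Rmult_1_r; apply d_le.
  - simpl sum_f_R0; destruct (block_succ (S n)) as [Hnext|Hsame].
    + rewrite Hnext, S_INR; pose proof (d_le (F (bridge (S n))) (bridge (S (S n)))); lra.
    + rewrite Hsame, bridge_step, metric_refl by auto; lra.
Qed.

Lemma bridge_avg_error_to_zero :
  avg_to_zero (fun i => d (F (bridge i)) (bridge (S i))).
Proof.
  apply (avg_to_zero_of_sum_sq_le _ (8 * D * D)).
  - intros; apply (metric_nonneg _ _ metric_d).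
  - intros n; pose proof (bridge_error_sum_le n) as Hsum.
    pose proof (cond_pos_sum _ n (fun i => metric_nonneg _ _ metric_d
                  (F (bridge i)) (bridge (S i)))).
    assert (HD : 0 <= D) by (rewrite <- (metric_refl _ _ metric_d x); apply d_le).
    pose proof (block_spec (S n)); pose proof (square_le_pow2 (block (S n))).
    assert (Hk : (S (block (S n)) * S (block (S n)) <= 8 * S n)%nat) by lia.
    apply le_INR in Hk; rewrite !mult_INR, S_INR in Hk; simpl (INR 8) in Hk.
    pose proof (pos_INR (block (S n))); nra.
Qed.

End Bridge.

Arguments bridge {X}.

Section Chains.

Variables (X L : Type) (d : X -> X -> R) (f : L -> X -> X) (delta : R).
Hypothesis metric_d : is_metric d.
Hypothesis delta_pos : 0 < delta.

Lemma delta_chain_single (l : L) (u w : X) : d (f l u) w < delta -> delta_chain d f delta u w.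
Proof.
  intros Hstep; exists 1%nat, (fun i => match i with O => u | _ => w end), (fun _ => l).
  repeat split; intros [|i] Hi; [exact Hstep|lia].
Qed.

Lemma delta_chain_trans (u v w : X) :
  delta_chain d f delta u v -> delta_chain d f delta v w -> delta_chain d f delta u w.
Proof.
  intros [b1 [xs1 [ls1 [Hu [Hv1 H1]]]]] [b2 [xs2 [ls2 [Hv2 [Hw H2]]]]].
  exists (b1 + b2)%nat, (fun i => if (i <=? b1)%nat then xs1 i else xs2 (i - b1)%nat),
    (fun i => if (i <? b1)%nat then ls1 i else ls2 (i - b1)%nat).
  split; [exact Hu|split].
  - destruct (Nat.leb_spec (b1 + b2) b1).
    + replace b2 with 0%nat in * by lia; rewrite Nat.add_0_r; congruence.
    + replace (b1 + b2 - b1)%nat with b2 by lia; exact Hw.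
  - intros i Hi; destruct (Nat.ltb_spec i b1), (Nat.leb_spec i b1), (Nat.leb_spec (S i) b1);
      try lia.
    + apply H1; lia.
    + replace i with b1 in * by lia; rewrite Nat.sub_diag, Hv1, <- Hv2.
      replace (S b1 - b1)%nat with 1%nat by lia; apply H2; lia.
    + replace (S i - b1)%nat with (S (i - b1)) by lia; apply H2; lia.
Qed.

Lemma delta_chain_orbit (u : nat -> X) (ls : nat -> L) (a b : nat) :
  (a <= b)%nat -> (forall i, (a <= i < b)%nat -> f (ls i) (u i) = u (S i)) ->
  delta_chain d f delta (u a) (u b).
Proof.
  intros Hab Horbit; exists (b - a)%nat, (fun i => u (a + i)%nat), (fun i => ls (a + i)%nat).
  rewrite Nat.add_0_r; replace (a + (b - a))%nat with b by lia.
  repeat split; intros i Hi.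
  rewrite Horbit, <- plus_n_Sm by lia; rewrite (metric_refl _ _ metric_d); exact delta_pos.
Qed.

Lemma delta_chain_Fsig (sigma : nat -> L) (z w : X) (t n : nat) :
  (t <= n)%nat -> d (Fsig f sigma z (S n)) w < delta ->
  delta_chain d f delta (Fsig f sigma z t) w.
Proof.
  intros Htn Hclose; apply (delta_chain_trans _ (Fsig f sigma z n)).
  - apply (delta_chain_orbit _ sigma); auto.
  - exact (delta_chain_single (sigma n) _ _ Hclose).
Qed.

Variables (l : L) (g : X -> X).
Hypothesis f_g : forall u, f l (g u) = u.
Variables (x y : X).

Lemma delta_chain_from_bridge_start (t : nat) (w : X) :
  Nat.even (block t) = true -> (1 <= offset t)%nat -> d w (bridge (f l) g x y t) < delta ->
  delta_chain d f delta x w.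
Proof.
  intros Heven Hoff Hclose; unfold bridge in Hclose; rewrite Heven in Hclose.
  replace (offset t) with (S (offset t - 1)) in Hclose by lia.
  apply (delta_chain_trans _ (Nat.iter (offset t - 1) (f l) x)).
  - exact (delta_chain_orbit (fun i => Nat.iter i (f l) x) (fun _ => l) 0 _
             (Nat.le_0_l _) (fun i _ => eq_refl)).
  - apply (delta_chain_single l); rewrite (metric_sym _ _ metric_d); exact Hclose.
Qed.

Lemma delta_chain_to_bridge_end (j : nat) :
  Nat.even (block j) = false -> delta_chain d f delta (bridge (f l) g x y j) y.
Proof.
  intros Hodd; unfold bridge; rewrite Hodd.
  set (m := (2 ^ block j - 1 - offset j)%nat).
  pose proof (delta_chain_orbit (fun i => Nat.iter (m - i) g y) (fun _ => l) 0 m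
                (Nat.le_0_l m)) as Hchain.
  cbv beta in Hchain; rewrite Nat.sub_0_r, Nat.sub_diag in Hchain; apply Hchain.
  intros i Hi; replace (m - i)%nat with (S (m - S i)) by lia; apply f_g.
Qed.

End Chains.

Theorem mainTheorem4 (X L : Type) (d : X -> X -> R) (f : L -> X -> X)
  (Hmetric : is_metric d) (Hcompact : metric_compact d)
  (HLfin : finite_type L) (HLne : inhabited L)
  (Hcont : forall l, metric_continuous d (f l))
  (Hsurj : forall l, surjective (f l))
  (Haasp : asymptotic_average_shadowing d f) :
  chain_transitive d f.
Proof.
  intros x y delta Hdelta.
  destruct HLne as [l].
  destruct (functional_choice (fun u v => f l v = u) (Hsurj l)) as [g f_g].
  destruct (metric_compact_bounded X d Hmetric x Hcompact) as [D d_le].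
  set (xs := bridge (f l) g x y).
  destruct (Haasp xs) as [z [sigma Hshadow]].
  { exists (fun _ => l); exact (bridge_avg_error_to_zero X (f l) g f_g x y d D Hmetric d_le). }
  assert (shadow_nonneg : forall i, 0 <= d (Fsig f sigma z i) (xs i))
    by (intros; apply (metric_nonneg _ _ Hmetric)).
  destruct (avg_to_zero_small_in_block _ delta 0 true Hdelta shadow_nonneg Hshadow)
    as [t [_ [Heven [Hoff Ht]]]].
  destruct (avg_to_zero_small_in_block _ delta (S t) false Hdelta shadow_nonneg Hshadow)
    as [[|n] [Hjt [Hodd [_ Hj]]]]; [lia|].
  apply delta_chain_trans with (v := Fsig f sigma z t);
    [|apply delta_chain_trans with (v := xs (S n))].
  - exact (delta_chain_from_bridge_start X L d f delta Hmetric Hdelta l g x y t _ Heven Hoff Ht).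
  - apply (delta_chain_Fsig X L d f delta Hmetric Hdelta sigma z _ t n); [lia|exact Hj].
  - exact (delta_chain_to_bridge_end X L d f delta Hmetric Hdelta l g f_g x y _ Hodd).
Qed.
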